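(* Let $\alpha\in\mathbb{C}$ with $\Re(\alpha)>-1/2$ (so that also $\Re(\alpha+1)>-1/2$). Then the canonical forms of the dual sequences satisfy $$x\,u_0(\alpha)=\frac{\alpha^2}{2\alpha+1}\,u_0(\alpha+1).$$
   Context: Let $\mathcal{A}$ be the differential operator $\mathcal{A}f(x)=-x^2f''(x)-xf'(x)+x^2f(x)$ with iterates $\mathcal{A}^n$. For $\Re(\alpha)>-1/2$, $p_n(x;\alpha)=(-1)^n e^{x}x^{-\alpha}\mathcal{A}^n(e^{-x}x^{\alpha})$ is a polynomial of degree $n$ with leading coefficient $(-2)^n(\alpha+1/2)_n$, and $P_n(x;\alpha)=p_n(x;\alpha)/\big((-2)^n(\alpha+1/2)_n\big)$. $u_0(\alpha)$ is the linear functional on complex polynomials determined by $\langle u_0(\alpha),P_k(\cdot;\alpha)\rangle=\delta_{0,k}$, $k\ge0$; for a polynomial $g$, $gu$ denotes the form $f\mapsto\langle u,gf\rangle$. *)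

From HB Require Import structures.
From mathcomp Require Import all_boot all_order all_algebra.
Set Implicit Arguments. Unset Strict Implicit. Unset Printing Implicit Defensive.
Import Order.TTheory GRing.Theory Num.Theory.
Local Open Scope ring_scope.

(* Complex numbers are modelled by an arbitrary numClosedFieldType R
   (C is one such field); 'Re is its real part. *)

(* Conjugated operator: for g(x) = e^{-x} x^a and a polynomial q,
     A (g q) = g * Aconj a q   where
     Aconj a q = -x^2 q'' + (2x^2 - (2a+1)x) q' + ((2a+1)x - a^2) q,
   obtained from A f = -x^2 f'' - x f' + x^2 f with
   g' = g(-1 + a/x),  g'' = g((-1 + a/x)^2 - a/x^2). *)
Definition Aconj (R : numClosedFieldType) (a : R) (q : {poly R}) : {poly R} :=
  - ('X^2 * q^`(2))
  + (2%:R *: 'X^2 - (2%:R * a + 1) *: 'X) * q^`()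
  + ((2%:R * a + 1) *: 'X - (a ^+ 2)%:P) * q.

(* p_n(x;a) = (-1)^n e^x x^{-a} A^n (e^{-x} x^a), i.e.
   A^n (g) = g * Aconj^n 1, so p_n = (-1)^n Aconj^n 1. *)
Definition p_poly (R : numClosedFieldType) (a : R) (n : nat) : {poly R} :=
  (-1) ^+ n *: iter n (Aconj a) 1.

Definition poch (R : numClosedFieldType) (a : R) (n : nat) : R :=
  \prod_(i < n) (a + i%:R).

(* Monic normalisation P_n = p_n / ((-2)^n (a+1/2)_n). *)
Definition P_poly (R : numClosedFieldType) (a : R) (n : nat) : {poly R} :=
  ((- 2%:R) ^+ n * poch (a + 2%:R^-1) n)^-1 *: p_poly a n.

(* u is the canonical form u_0(a) of the dual sequence of (P_n(.;a)):
   a linear functional on polynomials with <u, P_k> = delta_{0,k}. *)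
Definition is_u0 (R : numClosedFieldType) (a : R) (u : {poly R} -> R) : Prop :=
  (forall (c : R) (p q : {poly R}), u (c *: p + q) = c * u p + u q) /\
  (forall k : nat, u (P_poly a k) = (k == 0%N)%:R).

From HB Require Import structures.
From mathcomp Require Import all_boot all_order all_algebra.
From mathcomp Require Import ring.

Set Implicit Arguments.
Unset Strict Implicit.
Unset Printing Implicit Defensive.
Import Order.TTheory GRing.Theory Num.Theory.
Local Open Scope ring_scope.

(* Conjugating A by the weight e^{-x} x^a gives the operator [Aconj a] on
   polynomials, and P_n(.;a) is proportional to [Aconj a]^n 1, a polynomial of
   degree n with leading coefficient 2^n (a+1/2)_n != 0.  These iterates form a
   basis, so u_0(a) is the linear form with u(1) = 1 vanishing on the range of
   [Aconj a].  As x * x^a = x^(a+1), [Aconj a (x q) = x Aconj (a+1) q]; hence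
   f |-> u_0(a)(x f) vanishes on the range of [Aconj (a+1)] and is the multiple
   u_0(a)(x) u_0(a+1), where u_0(a)(x) = a^2/(2a+1) is read off from
   u_0(a)(Aconj a 1) = 0 with [Aconj a 1 = (2a+1) x - a^2]. *)

Section ConjugatedOperator.
Variable R : numClosedFieldType.
Implicit Types (b c : R) (p q f : {poly R}).

Lemma Re_addr_real c r : r \is Num.real -> 'Re (c + r) = 'Re c + r.
Proof. by move=> r_real; rewrite raddfD /=; congr (_ + _); apply/Creal_ReP. Qed.

Lemma neq0_Re_gt0 c : 0 < 'Re c -> c != 0.
Proof. by apply: contraTneq => ->; rewrite raddf0 ltxx. Qed.

Lemma poch_neq0 c : 0 < 'Re c -> forall n, poch c n != 0.
Proof.
move=> Re_c_gt0 n; apply/prodf_neq0 => i _; apply: neq0_Re_gt0.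
by rewrite Re_addr_real ?realn // ltr_wpDr.
Qed.

Lemma coef_Aconj0 b q : (Aconj b q)`_0 = - (b ^+ 2 * q`_0).
Proof.
rewrite /Aconj !mulrBl -!scalerAl.
rewrite !(coefD, coefN, coefB, coefZ, coefCM, coefXM, coefXnM) /=.
by rewrite oppr0 !mulr0 subrr !add0r.
Qed.

Lemma coef_AconjS b q i : (Aconj b q)`_i.+1 =
  (2%:R * b + 2%:R * i%:R + 1) * q`_i - (b + i.+1%:R) ^+ 2 * q`_i.+1.
Proof.
rewrite /Aconj !mulrBl -!scalerAl.
rewrite !(coefD, coefN, coefB, coefZ, coefCM, coefXM, coefXnM) /=.
rewrite !coef_deriv; case: i => [|i] /=; first by ring.
by rewrite subn2 /=; ring.
Qed.

Lemma Aconj_linear b c p q : Aconj b (c *: p + q) = c *: Aconj b p + Aconj b q.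
Proof. by rewrite /Aconj derivnD derivnZ derivD derivZ -!mul_polyC; ring. Qed.

Lemma Aconj1 b : Aconj b 1 = (2%:R * b + 1) *: 'X - (b ^+ 2)%:P.
Proof.
rewrite /Aconj !derivn_poly0 ?size_poly1 //.
by rewrite -polyC1 derivC !mulr0 oppr0 !add0r polyC1 mulr1.
Qed.

Lemma Aconj_mulX b q : Aconj b ('X * q) = 'X * Aconj (b + 1) q.
Proof.
apply/polyP => -[|i]; first by rewrite coef_Aconj0 !coefXM /= mulr0 oppr0.
rewrite coef_AconjS !coefXM /=; case: i => [|i] /=.
  by rewrite coef_Aconj0; ring.
by rewrite coef_AconjS; ring.
Qed.

Definition Aconj_iter b n := iter n (Aconj b) 1.

Lemma size_coef_Aconj b q n : (size q <= n.+1)%N ->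
  (size (Aconj b q) <= n.+2)%N
  /\ (Aconj b q)`_n.+1 = 2%:R * (b + 2%:R^-1 + n%:R) * q`_n.
Proof.
move=> /leq_sizeP q_small; split.
  apply/leq_sizeP => -[|j] // lt_nj.
  by rewrite coef_AconjS !q_small ?(ltnW lt_nj) // !mulr0 subrr.
rewrite coef_AconjS (q_small n.+1) // mulr0 subr0; congr (_ * _).
by rewrite !mulrDr mulfV ?pnatr_eq0 //; ring.
Qed.

Lemma size_coef_Aconj_iter b n :
  (size (Aconj_iter b n) <= n.+1)%N
  /\ (Aconj_iter b n)`_n = 2%:R ^+ n * poch (b + 2%:R^-1) n.
Proof.
elim: n => [|n [size_n coef_n]].
  by rewrite /Aconj_iter /poch /= size_poly1 big_ord0 coefC mulr1.
have [size_Sn coef_Sn] := size_coef_Aconj b size_n.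
rewrite /Aconj_iter iterS -/(Aconj_iter b n) size_Sn coef_Sn coef_n.
by rewrite /poch big_ord_recr /= exprS; split=> //; ring.
Qed.

Definition linear_form (L : {poly R} -> R) :=
  forall c p q, L (c *: p + q) = c * L p + L q.

Lemma linear_form0 L : linear_form L -> L 0 = 0.
Proof.
move=> L_lin; apply: (@addrI _ (L 0)).
by have := L_lin 1 0 0; rewrite scale1r addr0 mul1r addr0 => <-.
Qed.

Lemma linear_formZ L : linear_form L -> forall c p, L (c *: p) = c * L p.
Proof.
by move=> L_lin c p; rewrite -[c *: p]addr0 L_lin (linear_form0 L_lin) addr0.
Qed.

Lemma linear_formB L : linear_form L -> forall p q, L (p - q) = L p - L q.
Proof.
by move=> L_lin p q; rewrite addrC -scaleN1r L_lin mulN1r addrC.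
Qed.

Lemma linear_form_eq0 (s : nat -> {poly R}) L :
  (forall n, (size (s n) <= n.+1)%N /\ (s n)`_n != 0) ->
  linear_form L -> (forall n, L (s n) = 0) -> forall f, L f = 0.
Proof.
move=> s_deg L_lin L_s f.
elim: (size f) {-2}f (leqnn (size f)) => [|n IHn] g.
  by rewrite size_poly_leq0 => /eqP ->; apply: linear_form0.
move=> g_small; have [s_small s_lead] := s_deg n.
set k := g`_n / (s n)`_n.
have -> : g = k *: s n + (g - k *: s n) by rewrite addrC subrK.
rewrite L_lin L_s mulr0 add0r IHn //.
apply/leq_sizeP => j; rewrite leq_eqVlt => /orP[/eqP <-|lt_nj].
  by rewrite coefB coefZ divfK // subrr.
rewrite coefB coefZ (leq_sizeP _ _ g_small) ?(leq_sizeP _ _ s_small) //.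
by rewrite mulr0 subrr.
Qed.

Section CanonicalForm.
Variables (b : R) (u : {poly R} -> R).
Hypotheses (Re_b : 0 < 'Re (b + 2%:R^-1)) (u0_b : is_u0 b u).

Lemma is_u0_linear : linear_form u.
Proof. by case: u0_b. Qed.

Lemma is_u0_Aconj_iter n : u (Aconj_iter b n) = (n == 0%N)%:R.
Proof.
have [_ u_P] := u0_b; move: (u_P n).
rewrite /P_poly /p_poly -/(Aconj_iter b n) scalerA (linear_formZ is_u0_linear).
case: n => [|n]; first by rewrite /poch big_ord0 !expr0 !mulr1 invr1 mul1r.
move=> /eqP; rewrite mulf_eq0 => /orP[|/eqP //].
rewrite mulf_eq0 invr_eq0 mulf_eq0 !expf_eq0 !oppr_eq0 oner_eq0 pnatr_eq0.
by rewrite (negbTE (poch_neq0 Re_b _)).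
Qed.

Lemma linear_form_eq0_Aconj_iter L :
  linear_form L -> (forall n, L (Aconj_iter b n) = 0) -> forall f, L f = 0.
Proof.
apply: linear_form_eq0 => n; have [size_n ->] := size_coef_Aconj_iter b n.
by rewrite size_n mulf_neq0 ?expf_neq0 ?pnatr_eq0 ?poch_neq0.
Qed.

Lemma is_u0_Aconj f : u (Aconj b f) = 0.
Proof.
apply: (linear_form_eq0_Aconj_iter (L := fun f => u (Aconj b f))) => [c p q|n].
  by rewrite Aconj_linear is_u0_linear.
exact: (is_u0_Aconj_iter n.+1).
Qed.

Lemma is_u0_X : u 'X = b ^+ 2 / (2%:R * b + 1).
Proof.
have u_lin := is_u0_linear; have u1 : u 1 = 1 := is_u0_Aconj_iter 0.
have := is_u0_Aconj 1; rewrite Aconj1 (linear_formB u_lin) (linear_formZ u_lin).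
rewrite -(mulr1 (b ^+ 2)%:P) mul_polyC (linear_formZ u_lin) u1 mulr1.
move=> /eqP; rewrite subr_eq0 => /eqP <-; rewrite mulrAC divff ?mul1r //.
rewrite (_ : 2%:R * b + 1 = 2%:R * (b + 2%:R^-1)).
  by rewrite mulf_neq0 ?pnatr_eq0 ?neq0_Re_gt0.
by rewrite mulrDr mulfV ?pnatr_eq0.
Qed.

End CanonicalForm.
End ConjugatedOperator.

Theorem mainTheorem11 (R : numClosedFieldType) (a : R)
  (ha : - 2%:R^-1 < 'Re a)
  (u v : {poly R} -> R)
  (hu : is_u0 a u) (hv : is_u0 (a + 1) v) :
  forall f : {poly R}, u ('X * f) = a ^+ 2 / (2%:R * a + 1) * v f.
Proof.
have Re_a : 0 < 'Re (a + 2%:R^-1).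
  by rewrite Re_addr_real ?rpredV ?realn // -ltrBlDr sub0r.
have Re_a1 : 0 < 'Re (a + 1 + 2%:R^-1).
  by rewrite addrAC Re_addr_real ?real1 // ltr_wpDr.
move=> f; apply/eqP; rewrite -subr_eq0 -(is_u0_X Re_a hu); apply/eqP.
apply: (linear_form_eq0_Aconj_iter Re_a1
  (L := fun f => u ('X * f) - u 'X * v f)) => [c p q|[|n]].
- rewrite mulrDr -scalerAr !(is_u0_linear hu, is_u0_linear hv); ring.
- by rewrite (is_u0_Aconj_iter Re_a1 hv 0) !mulr1 subrr.
- rewrite (is_u0_Aconj_iter Re_a1 hv n.+1) mulr0 subr0.
  by rewrite /Aconj_iter iterS -Aconj_mulX (is_u0_Aconj Re_a hu).
Qed.
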